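(* Let $X$ be an $\mathcal M$-set, let $A,B\subset\omega$ be co-infinite, and let $x\in X$ be supported on both $A$ and $B$. Then $x$ is supported on $A\cap B$.
   Context: $\omega=\{1,2,3,\dots\}$, $\mathcal M$ is the monoid of injective maps $\omega\to\omega$, and an $\mathcal M$-set is a set with a left $\mathcal M$-action. For $A\subset\omega$, $\mathcal M_A$ is the submonoid of injections fixing $A$ elementwise; $x\in X$ is supported on $A$ if $f.x=x$ for all $f\in\mathcal M_A$. A set $A\subset\omega$ is co-infinite if $\omega\setminus A$ is infinite. *)

From Stdlib Require Import Arith.

Definition omega : Type := { n : nat | 0 < n }.

Definition injective {A B : Type} (f : A -> B) : Prop :=
  forall x y, f x = f y -> x = y.

(* M = monoid of injective maps omega -> omega, composition as product,
   identity as unit. The action is given on all functions but only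
   its values on injective maps are constrained/used. *)
Record MSet := {
  carrier :> Type;
  act : (omega -> omega) -> carrier -> carrier;
  act_id : forall x, act (fun n => n) x = x;
  act_comp : forall f g x, injective f -> injective g ->
      act (fun n => f (g n)) x = act f (act g x)
}.

Definition co_infinite (A : omega -> Prop) : Prop :=
  forall m : nat, exists a : omega, ~ A a /\ m <= proj1_sig a.

Definition supported_on (X : MSet) (A : omega -> Prop) (x : X) : Prop :=
  forall f : omega -> omega, injective f -> (forall a, A a -> f a = a) ->
    act X f x = x.

(* Since x is supported on the co-infinite set A, the value f.x depends only
   on the restriction of f to A: an injection h agreeing with f on A factors
   as t o s, where s fixes A and t is the injection that agrees with f on A
   and maps the complement of A increasingly onto the (infinite) complement
   of f(A).  Now let f fix A /\ B, and choose injections j into the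
   complement of f(A) and k into the complement of B with disjoint ranges.
   The injections
     g1 = f on A, j elsewhere;   g2 = g1 on B, k elsewhere;
     g3 = id on B, k elsewhere
   satisfy f = g1 on A, g1 = g2 on B, g2 = g3 on A, and g3 fixes B, hence
   f.x = g1.x = g2.x = g3.x = x. *)

From Stdlib Require Import Arith Lia List FinFun.
From Stdlib Require Import Classical ClassicalEpsilon FunctionalExtensionality.

Lemma omega_eq (a b : omega) : proj1_sig a = proj1_sig b -> a = b.
Proof.
  destruct a as [a Ha], b as [b Hb]; simpl; intros <-.
  f_equal; apply Peano_dec.le_unique.
Qed.

Lemma injective_nat_unbounded (h : nat -> nat) :
  injective h -> forall m, exists n, m <= h n.
Proof.
  intros Hh m; apply NNPP; intro Hnone.
  assert (Hlt : forall n, h n < m).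
  { intro n; destruct (le_lt_dec m (h n)); [exfalso; eauto | assumption]. }
  assert (Hnodup : NoDup (map h (seq 0 (S m))))
    by (apply Injective_map_NoDup; [exact Hh | apply seq_NoDup]).
  assert (Hincl : incl (map h (seq 0 (S m))) (seq 0 m)).
  { intros y Hy; apply in_map_iff in Hy; destruct Hy as [n [<- _]].
    apply in_seq; specialize (Hlt n); lia. }
  pose proof (NoDup_incl_length Hnodup Hincl) as Hlen.
  rewrite length_map, !length_seq in Hlen; lia.
Qed.

Section Counting.

Variable Q : nat -> Prop.

Fixpoint count_below (n : nat) : nat :=
  match n with
  | 0 => 0
  | S k => count_below k + if excluded_middle_informative (Q k) then 1 else 0
  end.

Lemma count_below_mono m n : m <= n -> count_below m <= count_below n.
Proof.
  induction 1 as [|n _ IH]; simpl; [lia|].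
  destruct (excluded_middle_informative (Q n)); lia.
Qed.

Lemma count_below_lt p q : Q p -> p < q -> count_below p < count_below q.
Proof.
  intros Hp Hpq; apply Nat.lt_le_trans with (count_below (S p)).
  - simpl; destruct (excluded_middle_informative (Q p)); [lia | contradiction].
  - apply count_below_mono; lia.
Qed.

Lemma count_below_inj p q :
  Q p -> Q q -> count_below p = count_below q -> p = q.
Proof.
  intros Hp Hq Heq.
  destruct (Nat.lt_trichotomy p q) as [Hpq | [Hpq | Hqp]]; [| assumption |].
  - pose proof (count_below_lt p q Hp Hpq); lia.
  - pose proof (count_below_lt q p Hq Hqp); lia.
Qed.

Lemma count_below_hits n m :
  S n <= count_below m -> exists k, Q k /\ count_below k = n.
Proof.
  induction m as [|m IH]; simpl; intro Hm; [lia|].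
  destruct (le_lt_dec (S n) (count_below m)) as [Hle | Hlt]; [exact (IH Hle)|].
  destruct (excluded_middle_informative (Q m)) as [Hq | _]; [|lia].
  exists m; split; [exact Hq | lia].
Qed.

Hypothesis Q_unbounded : forall m, exists k, m <= k /\ Q k.

Lemma count_below_unbounded n : exists m, n <= count_below m.
Proof.
  induction n as [|n [m Hm]]; [exists 0; lia|].
  destruct (Q_unbounded m) as [k [Hmk Hk]].
  exists (S k); simpl.
  destruct (excluded_middle_informative (Q k)); [|contradiction].
  pose proof (count_below_mono m k Hmk); lia.
Qed.

Lemma count_below_surj n : exists k, Q k /\ count_below k = n.
Proof.
  destruct (count_below_unbounded (S n)) as [m Hm].
  exact (count_below_hits n m Hm).
Qed.

End Counting.

Definition unbounded (P : omega -> Prop) : Prop :=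
  forall m : nat, exists a : omega, P a /\ m <= proj1_sig a.

Definition compl (P : omega -> Prop) : omega -> Prop := fun a => ~ P a.

Definition image (f : omega -> omega) (A : omega -> Prop) : omega -> Prop :=
  fun z => exists a, A a /\ f a = z.

Lemma unbounded_mono (P Q : omega -> Prop) :
  (forall a, P a -> Q a) -> unbounded P -> unbounded Q.
Proof. intros HPQ HP m; destruct (HP m) as [a [Ha Hm]]; eauto. Qed.

Lemma unbounded_union (P Q : omega -> Prop) :
  unbounded (fun a => P a \/ Q a) -> unbounded P \/ unbounded Q.
Proof.
  intros HPQ; destruct (classic (unbounded P)) as [HP | HP]; [now left | right].
  apply not_all_ex_not in HP; destruct HP as [m0 Hm0].
  intro m; destruct (HPQ (Nat.max m m0)) as [a [[Ha | Ha] Hm]].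
  - exfalso; apply Hm0; exists a; split; [exact Ha | lia].
  - exists a; split; [exact Ha | lia].
Qed.

Section Enumeration.

Variable P : omega -> Prop.

Definition rank (a : omega) : nat :=
  count_below (fun k => exists b, proj1_sig b = k /\ P b) (proj1_sig a).

Definition enum (n : nat) : omega :=
  epsilon (inhabits (exist _ 1 Nat.lt_0_1)) (fun a => P a /\ rank a = n).

Lemma rank_inj a b : P a -> P b -> rank a = rank b -> a = b.
Proof.
  intros Ha Hb Heq; apply omega_eq.
  apply (count_below_inj _ _ _ (ex_intro _ a (conj eq_refl Ha))
                                (ex_intro _ b (conj eq_refl Hb)) Heq).
Qed.

Hypothesis P_unbounded : unbounded P.

Lemma enum_spec n : P (enum n) /\ rank (enum n) = n.
Proof.
  unfold enum; apply epsilon_spec.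
  destruct (count_below_surj (fun k => exists b, proj1_sig b = k /\ P b)) with n
    as [k [[b [<- Hb]] Hk]].
  - intro m; destruct (P_unbounded m) as [a [Ha Hm]].
    exists (proj1_sig a); split; [exact Hm | now exists a].
  - now exists b.
Qed.

Lemma enum_in n : P (enum n).
Proof. exact (proj1 (enum_spec n)). Qed.

Lemma rank_enum n : rank (enum n) = n.
Proof. exact (proj2 (enum_spec n)). Qed.

Lemma enum_rank a : P a -> enum (rank a) = a.
Proof. intro Ha; apply rank_inj; [apply enum_in | exact Ha | apply rank_enum]. Qed.

Lemma enum_inj : injective enum.
Proof. intros m n Heq; rewrite <- (rank_enum m), <- (rank_enum n), Heq; reflexivity. Qed.

End Enumeration.

Lemma co_infinite_image (A : omega -> Prop) (f : omega -> omega) :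
  co_infinite A -> injective f -> co_infinite (image f A).
Proof.
  intros HA Hf m.
  destruct (injective_nat_unbounded (fun n => proj1_sig (f (enum (compl A) n))))
    with m as [n Hn].
  { intros p q Heq; apply (enum_inj _ HA), Hf, omega_eq, Heq. }
  exists (f (enum (compl A) n)); split; [|exact Hn].
  intros [a [Ha Heq]]; apply Hf in Heq; subst a.
  exact (enum_in _ HA n Ha).
Qed.

Lemma disjoint_injections (D E : omega -> Prop) :
  unbounded D -> unbounded E ->
  exists j k : omega -> omega,
    injective j /\ injective k /\ (forall y, E (j y)) /\ (forall y, D (k y)) /\
    (forall y z, j y <> k z).
Proof.
  intros HD HE.
  set (half i z := exists n, enum D (2 * n + i) = z).
  assert (Hhalves : forall z, half 0 z -> half 1 z -> False).
  { intros z [m Hm] [n Hn]; rewrite <- Hn in Hm.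
    apply (enum_inj _ HD) in Hm; lia. }
  assert (Hsplit : exists i, unbounded (fun z => E z /\ ~ half i z)).
  { destruct (unbounded_union (fun z => E z /\ ~ half 0 z) (fun z => E z /\ ~ half 1 z))
      as [H | H]; [| now exists 0 | now exists 1].
    apply (unbounded_mono E); [|exact HE].
    intros z Hz; destruct (classic (half 0 z)); [right | left]; eauto. }
  destruct Hsplit as [i Hi].
  exists (fun y => enum (fun z => E z /\ ~ half i z) (proj1_sig y)), (fun y => enum D (2 * proj1_sig y + i)).
  repeat split.
  - intros y z Heq; apply (enum_inj _ Hi), omega_eq in Heq; exact Heq.
  - intros y z Heq; apply (enum_inj _ HD) in Heq; apply omega_eq; lia.
  - intro y; exact (proj1 (enum_in _ Hi _)).
  - intro y; apply (enum_in _ HD).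
  - intros y z Heq; apply (proj2 (enum_in _ Hi (proj1_sig y))).
    rewrite Heq; now exists (proj1_sig z).
Qed.

Definition piecewise (C : omega -> Prop) (u v : omega -> omega) (y : omega) : omega :=
  if excluded_middle_informative (C y) then u y else v y.

Lemma piecewise_in C u v y : C y -> piecewise C u v y = u y.
Proof. intro Hy; unfold piecewise; destruct (excluded_middle_informative (C y)); tauto. Qed.

Lemma piecewise_out C u v y : ~ C y -> piecewise C u v y = v y.
Proof. intro Hy; unfold piecewise; destruct (excluded_middle_informative (C y)); tauto. Qed.

Lemma piecewise_inj (C : omega -> Prop) (u v : omega -> omega) :
  injective u -> (forall y z, ~ C y -> ~ C z -> v y = v z -> y = z) ->
  (forall y z, C y -> ~ C z -> u y <> v z) -> injective (piecewise C u v).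
Proof.
  intros Hu Hv Huv y z; unfold piecewise.
  destruct (excluded_middle_informative (C y)) as [Hy | Hy],
           (excluded_middle_informative (C z)) as [Hz | Hz]; intro Heq.
  - exact (Hu _ _ Heq).
  - exfalso; exact (Huv _ _ Hy Hz Heq).
  - exfalso; exact (Huv _ _ Hz Hy (eq_sym Heq)).
  - exact (Hv _ _ Hy Hz Heq).
Qed.

Definition extension (A : omega -> Prop) (f : omega -> omega) : omega -> omega :=
  piecewise A f (fun y => enum (compl (image f A)) (rank (compl A) y)).

Section Support.

Variables (X : MSet) (A : omega -> Prop) (x : X).
Hypothesis A_co_infinite : co_infinite A.
Hypothesis x_supported : supported_on X A x.

Lemma act_eq_extension (f h : omega -> omega) :
  injective f -> injective h -> (forall a, A a -> h a = f a) ->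
  act X h x = act X (extension A f) x.
Proof.
  intros Hf Hh Hhf.
  set (E := compl (image f A)).
  assert (HE : unbounded E) by exact (co_infinite_image A f A_co_infinite Hf).
  assert (HhE : forall y, ~ A y -> E (h y)).
  { intros y Hy [a [Ha Heq]]; rewrite <- Hhf in Heq by exact Ha.
    apply Hh in Heq; subst a; contradiction. }
  set (s := piecewise A (fun y => y) (fun y => enum (compl A) (rank E (h y)))).
  assert (Hs : injective s).
  { apply piecewise_inj.
    - intros y z Heq; exact Heq.
    - intros y z Hy Hz Heq; apply (enum_inj _ A_co_infinite) in Heq.
      exact (Hh _ _ (rank_inj E _ _ (HhE y Hy) (HhE z Hz) Heq)).
    - intros y z Hy _ Heq; cbv beta in Heq; rewrite Heq in Hy.
      exact (enum_in _ A_co_infinite _ Hy). }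
  assert (Ht : injective (extension A f)).
  { apply piecewise_inj; [exact Hf | |].
    - intros y z Hy Hz Heq; exact (rank_inj _ _ _ Hy Hz (enum_inj E HE _ _ Heq)).
    - intros y z Hy _ Heq; apply (enum_in E HE (rank (compl A) z)).
      exists y; split; [exact Hy | exact Heq]. }
  assert (Hfactor : h = fun y => extension A f (s y)).
  { apply functional_extensionality; intro y; unfold extension, s.
    destruct (classic (A y)) as [Hy | Hy].
    - rewrite (piecewise_in A (fun y => y) _ y Hy), piecewise_in by exact Hy.
      exact (Hhf y Hy).
    - rewrite (piecewise_out A (fun y => y) _ y Hy).
      rewrite piecewise_out by exact (enum_in _ A_co_infinite _).
      rewrite rank_enum by exact A_co_infinite.
      symmetry; exact (enum_rank E HE _ (HhE y Hy)). }
  transitivity (act X (fun y => extension A f (s y)) x); [now f_equal|].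
  rewrite act_comp by assumption; f_equal.
  apply x_supported; [exact Hs|].
  intros a Ha; exact (piecewise_in _ _ _ _ Ha).
Qed.

Lemma act_agree (f g : omega -> omega) :
  injective f -> injective g -> (forall a, A a -> f a = g a) ->
  act X f x = act X g x.
Proof.
  intros Hf Hg Hfg.
  rewrite (act_eq_extension f f), (act_eq_extension f g); auto.
  intros a Ha; symmetry; auto.
Qed.

End Support.

Section Intersection.

Variables (X : MSet) (A B : omega -> Prop) (x : X).
Hypotheses (A_co_infinite : co_infinite A) (B_co_infinite : co_infinite B).
Hypotheses (x_supported_A : supported_on X A x) (x_supported_B : supported_on X B x).
Variables (f j k : omega -> omega).
Hypotheses (f_inj : injective f) (j_inj : injective j) (k_inj : injective k).
Hypothesis f_fixes : forall a, A a /\ B a -> f a = a.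
Hypothesis j_avoids : forall y, ~ image f A (j y).
Hypothesis k_avoids : forall y, ~ B (k y).
Hypothesis jk_disjoint : forall y z, j y <> k z.

Lemma act_fixed_of_disjoint_injections : act X f x = x.
Proof.
  set (g1 := piecewise A f j).
  set (g2 := piecewise B g1 k).
  set (g3 := piecewise B (fun y => y) k).
  assert (Hg1 : injective g1).
  { apply piecewise_inj; [exact f_inj | auto |].
    intros y z Hy _ Heq; apply (j_avoids z); now exists y. }
  assert (Hg2 : injective g2).
  { apply piecewise_inj; [exact Hg1 | auto |].
    intros y z Hy _; unfold g1; destruct (classic (A y)) as [Ha | Ha].
    - rewrite piecewise_in, f_fixes by tauto; intros ->; exact (k_avoids z Hy).
    - rewrite piecewise_out by exact Ha; apply jk_disjoint. }
  assert (Hg3 : injective g3).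
  { apply piecewise_inj; [intros y z Heq; exact Heq | auto |].
    intros y z Hy _ ->; exact (k_avoids z Hy). }
  transitivity (act X g1 x).
  { apply (act_agree X A); auto; intros a Ha; symmetry; exact (piecewise_in _ _ _ _ Ha). }
  transitivity (act X g2 x).
  { apply (act_agree X B); auto; intros a Ha; symmetry; exact (piecewise_in _ _ _ _ Ha). }
  transitivity (act X g3 x).
  { apply (act_agree X A); auto; intros a Ha; unfold g2, g3, g1.
    destruct (classic (B a)) as [Hb | Hb].
    - rewrite !piecewise_in by assumption; apply f_fixes; tauto.
    - rewrite !piecewise_out by assumption; reflexivity. }
  apply x_supported_B; [exact Hg3|].
  intros b Hb; exact (piecewise_in _ _ _ _ Hb).
Qed.

End Intersection.

Theorem proposition1p4 (X : MSet) (A B : omega -> Prop) (x : X) :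
  co_infinite A -> co_infinite B ->
  supported_on X A x -> supported_on X B x ->
  supported_on X (fun a => A a /\ B a) x.
Proof.
  intros HA HB HxA HxB f Hf Hfix.
  destruct (disjoint_injections (compl B) (compl (image f A)) HB
              (co_infinite_image A f HA Hf))
    as (j & k & Hj & Hk & HjE & HkB & Hjk).
  exact (act_fixed_of_disjoint_injections X A B x HA HB HxA HxB f j k Hf Hj Hk
           Hfix HjE HkB Hjk).
Qed.
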